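(* Assume the standing hypotheses (H). Let $A$ be a part of $G$ with $|A|=4$, and let $L_A$ be the set of colors $c$ such that $c\in L(u)\cap L(v)$ for some good pair $\{u,v\}$ for $A$. Then $|L_A|\ge k_3+k_4$.
   Context: A list assignment $L$ assigns to each vertex $v$ a set $L(v)$ of colors; an $L$-coloring is a proper coloring $f$ with $f(v)\in L(v)$ for all $v$; $\mathrm{ch}$ denotes choice number and $\chi$ chromatic number. A part of a complete multipartite graph is one of its maximal stable sets. Standing hypotheses (H): $k\ge1$ and $n\ge 2k+2$ are integers; $G$ is a complete $k$-partite graph (exactly $k$ nonempty parts) on $n$ vertices; $L$ is a list assignment for $G$ with $|L(v)|\ge\lceil (n+k-1)/3\rceil$ for every vertex $v$; $G$ has no $L$-coloring; $\left|\bigcup_{v\in V(G)}L(v)\right|\le n-1$; and every graph $H$ with fewer than $n$ vertices satisfies $\mathrm{ch}(H)\le\max\{\chi(H),\lceil(|V(H)|+\chi(H)-1)/3\rceil\}$. For $i\in\{1,2,3,4\}$, $k_i$ denotes the number of parts of $G$ of size $i$. For a part $A$ with $|A|\ge3$, a pair $\{u,v\}\subseteq A$ of distinct vertices is a good pair for $A$ if either $|A|=3$ and $|L(u)\cap L(v)|\ge\frac{k_1+k_4+1}{3}$, or $|A|=4$ and $|L(u)\cap L(v)|\ge|L(w)\cap L(z)|$ where $\{w,z\}=A\setminus\{u,v\}$. *)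

From HB Require Import structures.
From mathcomp Require Import all_boot.
Set Implicit Arguments. Unset Strict Implicit. Unset Printing Implicit Defensive.

Definition ceil_div (a b : nat) : nat := (a + b - 1) %/ b.

Record sgraph (V : finType) := SGraph {
  adj : rel V;
  adj_sym : symmetric adj;
  adj_irr : irreflexive adj }.

Definition proper_col (V : finType) (C : Type) (e : rel V) (f : V -> C) : Prop :=
  forall u v, e u v -> f u <> f v.

Definition colorable (V : finType) (G : sgraph V) (m : nat) : Prop :=
  exists f : V -> 'I_m, proper_col (adj G) f.

Definition colorableb (V : finType) (G : sgraph V) (m : nat) : bool :=
  [exists f : {ffun V -> 'I_m}, [forall u, forall v, adj G u v ==> (f u != f v)]].

Lemma colorable_ex (V : finType) (G : sgraph V) : exists m, colorableb G m.
Proof.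
exists #|V|; apply/existsP; exists [ffun v => enum_rank v].
apply/forallP => u; apply/forallP => v; apply/implyP => Huv.
rewrite !ffunE; apply/negP => /eqP/enum_rank_inj Heq.
by move: Huv; rewrite Heq (adj_irr G).
Qed.

Definition chi (V : finType) (G : sgraph V) : nat := ex_minn (colorable_ex G).

(* G is t-choosable (i.e. ch(G) <= t): every list assignment with all lists
   of size >= t, over any (finite) color set, admits an L-coloring *)
Definition choosable (V : finType) (G : sgraph V) (t : nat) : Prop :=
  forall (C : finType) (L : V -> {set C}), (forall v, t <= #|L v|) ->
    exists f : V -> C, (forall v, f v \in L v) /\ proper_col (adj G) f.

(* Complete k-partite graph given by a part map p : V -> 'I_k:
   u ~ v iff they lie in different parts. *)
Definition cmp_adj (V : finType) (k : nat) (p : V -> 'I_k) : rel V :=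
  fun u v => p u != p v.

Definition part (V : finType) (k : nat) (p : V -> 'I_k) (a : 'I_k) : {set V} :=
  [set v | p v == a].

Definition kcount (V : finType) (k : nat) (p : V -> 'I_k) (i : nat) : nat :=
  #|[set j : 'I_k | #|part p j| == i]|.

Definition good_pair (V C : finType) (k : nat) (p : V -> 'I_k) (L : V -> {set C})
    (a : 'I_k) (u v : V) : bool :=
  [&& p u == a, p v == a, u != v &
    ((#|part p a| == 3) &&
       (kcount p 1 + kcount p 4 + 1 <= 3 * #|L u :&: L v|))
    || ((#|part p a| == 4) &&
       [forall w, forall z,
          [&& p w == a, p z == a, w != z, w \notin [set u; v] & z \notin [set u; v]]
          ==> (#|L w :&: L z| <= #|L u :&: L v|)])].

Definition LA (V C : finType) (k : nat) (p : V -> 'I_k) (L : V -> {set C})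
    (a : 'I_k) : {set C} :=
  [set c | [exists u, exists v, good_pair p L a u v && (c \in L u :&: L v)]].

(* The proof has three ingredients.
   - Sparseness: no colour lies in the lists of three vertices of one part.
     Otherwise delete those vertices, colour the remaining graph from the
     lists minus that colour using the bound for smaller graphs (here
     n >= 2k+2 is needed), and give the deleted vertices the common colour.
   - Matchings: the four vertices of A split into pairs in three ways; in
     each matching the pair with the larger common list is a good pair.
     By sparseness the six pairwise intersections of the lists of A are
     disjoint, so the three chosen intersections are disjoint subsets of
     L_A and 2|L_A| >= sum of the six intersections.
   - Counting: by inclusion-exclusion the six intersections have total size
     at least 4 ceil((n+k-1)/3) - (n-1), and counting the vertices part by
     part (k + 2 k_3 + 3 k_4 <= n, k_4 >= 1) turns this into 2(k_3+k_4). *)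

From HB Require Import structures.
From mathcomp Require Import all_boot zify.

Set Implicit Arguments.
Unset Strict Implicit.
Unset Printing Implicit Defensive.

Section PartSizes.

Variables (V : finType) (k : nat) (p : V -> 'I_k).

Lemma kcountE i : kcount p i = \sum_(j < k) (#|part p j| == i).
Proof.
rewrite /kcount -sum1_card big_mkcond /=.
by apply: eq_bigr => j _; rewrite inE; case: eqP.
Qed.

Lemma sum_card_part : \sum_(j < k) #|part p j| = #|V|.
Proof.
rewrite -sum1_card (partition_big p xpredT) //=.
by apply: eq_bigr => j _; rewrite -sum1_card; apply: eq_bigl => v; rewrite !inE.
Qed.

(* With nonempty parts, each part contributes at least 1 vertex, parts of size
   3 and 4 contribute 2 and 3 more; the part a of size 4 gives k_4 >= 1. *)
Lemma part_size_bounds a :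
  (forall j : 'I_k, exists v : V, p v = j) -> #|part p a| = 4 ->
  [/\ k + 2 * kcount p 3 + 3 * kcount p 4 <= #|V|,
      kcount p 3 + kcount p 4 <= k & 1 <= kcount p 4].
Proof.
move=> part_nonempty h4; split.
- rewrite -sum_card_part !kcountE -{1}[k]card_ord -sum1_card.
  rewrite !big_distrr -!big_split /=; apply: leq_sum => j _.
  have : 0 < #|part p j|.
    by case: (part_nonempty j) => v hv; apply/card_gt0P; exists v; rewrite inE hv.
  by case: #|part p j| => [|[|[|[|[|s]]]]].
- rewrite !kcountE -big_split /= -[X in _ <= X]card_ord -sum1_card.
  by apply: leq_sum => j _; case: #|part p j| => [|[|[|[|[|s]]]]].
- by apply/card_gt0P; exists a; rewrite inE h4.
Qed.

End PartSizes.

Section CompleteMultipartite.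

Variables (W : finType) (k : nat) (q : W -> 'I_k).

Lemma cmp_adj_sym : symmetric (cmp_adj q).
Proof. by move=> u v; rewrite /cmp_adj eq_sym. Qed.

Lemma cmp_adj_irr : irreflexive (cmp_adj q).
Proof. by move=> u; rewrite /cmp_adj eqxx. Qed.

Definition cmp_graph : sgraph W := SGraph cmp_adj_sym cmp_adj_irr.

(* The part map itself is a proper k-colouring. *)
Lemma chi_cmp_graph : chi cmp_graph <= k.
Proof.
rewrite /chi; case: ex_minnP => m _ m_min; apply: m_min; apply/existsP.
exists [ffun u => q u]; apply/forallP => u; apply/forallP => v.
by apply/implyP; rewrite !ffunE.
Qed.

End CompleteMultipartite.

Definition bound_below (n : nat) : Prop :=
  forall (W : finType) (H : sgraph W), #|W| < n ->
    choosable H (maxn (chi H) (ceil_div (#|W| + chi H - 1) 3)).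

Definition color_sparse (V C : finType) (k : nat) (p : V -> 'I_k)
    (L : V -> {set C}) : Prop :=
  forall (j : 'I_k) (c : C), #|[set v in part p j | c \in L v]| <= 2.

Lemma extend_by_common_color (V C : finType) (k : nat) (p : V -> 'I_k)
    (L : V -> {set C}) (S : {set V}) (j : 'I_k) (c : C)
    (f' : {v : V | v \notin S} -> C) :
  S \subset part p j -> {in S, forall v, c \in L v} ->
  (forall u, f' u \in L (val u) :\ c) ->
  proper_col (cmp_adj (fun u => p (val u))) f' ->
  exists f : V -> C, (forall v, f v \in L v) /\ proper_col (cmp_adj p) f.
Proof.
move=> /subsetP Sj cS f'L f'proper.
have pS v : v \in S -> p v = j by move/Sj; rewrite inE; apply/eqP.
have f'c u : f' u != c by have /setD1P[] := f'L u.
exists (fun v => if insub v is Some u then f' u else c); split.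
- move=> v; case: insubP => [u _ <- | /negbNE]; last exact: cS.
  by have /setD1P[] := f'L u.
- move=> u v; rewrite /cmp_adj.
  case: insubP => [u' _ <- | /negbNE uS]; case: insubP => [v' _ <- | /negbNE vS].
  + exact: f'proper.
  + by move=> _; apply/eqP/f'c.
  + by move=> _ /esym; apply/eqP/f'c.
  + by rewrite (pS _ uS) (pS _ vS) eqxx.
Qed.

(* Sparseness of a minimal counterexample: three vertices of one part sharing
   a colour could be deleted and coloured last. *)
Lemma minimal_counterexample_sparse (k n : nat) (V C : finType)
    (p : V -> 'I_k) (L : V -> {set C}) :
  2 * k + 2 <= n -> #|V| = n ->
  (forall v, ceil_div (n + k - 1) 3 <= #|L v|) ->
  ~ (exists f : V -> C, (forall v, f v \in L v) /\ proper_col (cmp_adj p) f) ->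
  bound_below n -> color_sparse p L.
Proof.
move=> hn hV hL not_colorable IH j c; rewrite leqNgt; apply/negP => big.
set S := [set v in part p j | c \in L v] in big.
pose W : finType := {v : V | v \notin S}.
pose H := cmp_graph (fun u : W => p (val u)).
have cardW : #|{: W}| + #|S| = n.
  rewrite card_sig -hV -(cardsC S) addnC; congr (_ + _).
  by apply: eq_card => v; rewrite !inE.
have chiH : chi H <= k := chi_cmp_graph _.
have W_small : #|{: W}| < n by lia.
(* Here n >= 2k + 2 is used: the lists lose at most the colour c. *)
have list_bound : maxn (chi H) (ceil_div (#|{: W}| + chi H - 1) 3) <
                  ceil_div (n + k - 1) 3 by rewrite /ceil_div; lia.
have [f' [f'L f'proper]] :
    exists f' : W -> C, (forall u, f' u \in L (val u) :\ c) /\ proper_col (adj H) f'.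
  apply: (IH _ H W_small) => u; rewrite -ltnS; apply: leq_trans list_bound _.
  have := cardsD1 c (L (val u)); have := hL (val u).
  by case: (c \in L (val u)) => /=; lia.
apply: not_colorable.
apply: (extend_by_common_color (j := j) (c := c) _ _ f'L f'proper).
- by apply/subsetP => v; rewrite inE => /andP[].
- by move=> v; rewrite inE => /andP[].
Qed.

Lemma card_union4_ge (T : finType) (A1 A2 A3 A4 : {set T}) :
  #|A1| + #|A2| + #|A3| + #|A4| <=
  #|A1 :|: A2 :|: A3 :|: A4| +
  (#|A1 :&: A2| + #|A1 :&: A3| + #|A1 :&: A4| +
   #|A2 :&: A3| + #|A2 :&: A4| + #|A3 :&: A4|).
Proof.
have e12 := cardsUI A1 A2.
have e3 := cardsUI (A1 :|: A2) A3; rewrite setIUl in e3.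
have e4 := cardsUI (A1 :|: A2 :|: A3) A4; rewrite !setIUl in e4.
have u3 := leq_card_setU (A1 :&: A3) (A2 :&: A3).
have u4 := leq_card_setU (A1 :&: A4 :|: A2 :&: A4) (A3 :&: A4).
have u4' := leq_card_setU (A1 :&: A4) (A2 :&: A4).
move: u3 u4 u4' => [u3 _] [u4 _] [u4' _]; lia.
Qed.

Lemma card_disjoint3_le (T : finType) (A1 A2 A3 B : {set T}) :
  A1 \subset B -> A2 \subset B -> A3 \subset B ->
  [disjoint A1 & A2] -> [disjoint A1 & A3] -> [disjoint A2 & A3] ->
  #|A1| + #|A2| + #|A3| <= #|B|.
Proof.
move=> sB1 sB2 sB3 d12 d13 d23.
have e12 := cardsUI A1 A2; rewrite (disjoint_setI0 d12) cards0 addn0 in e12.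
have e3 := cardsUI (A1 :|: A2) A3.
rewrite setIUl (disjoint_setI0 d13) (disjoint_setI0 d23) setU0 cards0 addn0 in e3.
rewrite -e12 -e3; apply: subset_leq_card; by rewrite !subUset sB1 sB2 sB3.
Qed.

Definition enumerates (V : finType) (k : nat) (p : V -> 'I_k) (a : 'I_k)
    (s : seq V) : Prop :=
  uniq s /\ forall x, (p x == a) = (x \in s).

Lemma enumerates_perm (V : finType) (k : nat) (p : V -> 'I_k) (a : 'I_k)
    (s t : seq V) :
  perm_eq s t -> enumerates p a s -> enumerates p a t.
Proof.
move=> st [us mem_s]; split; first by rewrite -(perm_uniq st).
by move=> x; rewrite mem_s (perm_mem st).
Qed.

Lemma enum_part4 (V : finType) (k : nat) (p : V -> 'I_k) (a : 'I_k) :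
  #|part p a| = 4 -> exists a1 a2 a3 a4, enumerates p a [:: a1; a2; a3; a4].
Proof.
move=> h4; have := enum_uniq (part p a); have := mem_enum (part p a).
have : size (enum (part p a)) = 4 by rewrite -cardE.
case: (enum (part p a)) => [|a1 [|a2 [|a3 [|a4 [|? ?]]]]] //= _ mem_s us.
by exists a1, a2, a3, a4; split => // x; rewrite mem_s inE.
Qed.

Definition max_meet (V C : finType) (L : V -> {set C}) (u v w z : V) : {set C} :=
  if #|L w :&: L z| <= #|L u :&: L v| then L u :&: L v else L w :&: L z.

Lemma max_meet_card (V C : finType) (L : V -> {set C}) (u v w z : V) :
  #|L u :&: L v| + #|L w :&: L z| <= 2 * #|max_meet L u v w z|.
Proof. by rewrite /max_meet; case: (leqP #|L w :&: L z| #|L u :&: L v|) => h; lia. Qed.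

Lemma max_meet_sub (V C : finType) (L : V -> {set C}) (u v w z : V) :
  max_meet L u v w z \subset (L u :&: L v) :|: (L w :&: L z).
Proof. by rewrite /max_meet; case: ifP => _; rewrite ?subsetUl ?subsetUr. Qed.

Section FourPart.

Variables (V C : finType) (k : nat) (p : V -> 'I_k) (L : V -> {set C}) (a : 'I_k).
Hypothesis h4 : #|part p a| = 4.

Lemma good_pair_max (u v w z : V) :
  enumerates p a [:: u; v; w; z] ->
  #|L w :&: L z| <= #|L u :&: L v| -> good_pair p L a u v.
Proof.
move=> [us mem_s] hle; move: us; rewrite /= !inE !negb_or.
move=> /and4P[/and3P[nuv nuw nuz] /andP[nvw nvz] nwz _].
have [pu pv] : p u == a /\ p v == a by rewrite !mem_s !inE !eqxx ?orbT.
rewrite /good_pair pu pv nuv h4 /=.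
apply/forallP => w'; apply/forallP => z'; apply/implyP => /and5P[pw pz nwz' nw nz].
rewrite !inE in nw nz; rewrite !mem_s !inE in pw pz.
move: pw pz nw nz nwz'.
by case/or4P => /eqP ->; case/or4P => /eqP ->; rewrite ?eqxx ?orbT //= => *;
  rewrite // setIC.
Qed.

Lemma max_meet_LA (u v w z : V) :
  enumerates p a [:: u; v; w; z] -> max_meet L u v w z \subset LA p L a.
Proof.
move=> he; have sub x y : good_pair p L a x y -> L x :&: L y \subset LA p L a.
  move=> g; apply/subsetP => c hc; rewrite inE.
  by apply/existsP; exists x; apply/existsP; exists y; rewrite g hc.
rewrite /max_meet; case: (leqP #|L w :&: L z| #|L u :&: L v|) => hle; apply: sub.
  exact: good_pair_max he hle.
apply: good_pair_max (ltnW hle).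
by apply: enumerates_perm he; rewrite (perm_catC [:: u; v] [:: w; z]).
Qed.

Hypothesis sparse : color_sparse p L.

Lemma count_lists_le2 (s : seq V) (c : C) :
  enumerates p a s -> count (fun v => c \in L v) s <= 2.
Proof.
move=> [us mem_s]; rewrite -size_filter; apply: leq_trans (sparse a c).
rewrite cardE; apply: uniq_leq_size; first exact: filter_uniq.
by move=> v; rewrite mem_filter mem_enum !inE mem_s => /andP[-> ->].
Qed.

Variables (a1 a2 a3 a4 : V).
Hypothesis henum : enumerates p a [:: a1; a2; a3; a4].

(* The three perfect matchings of the part cover pairwise disjoint colour
   sets, since a colour common to two of them would lie in three lists. *)
Lemma matchings_disjoint :
  let D12 := (L a1 :&: L a2) :|: (L a3 :&: L a4) in
  let D13 := (L a1 :&: L a3) :|: (L a2 :&: L a4) in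
  let D14 := (L a1 :&: L a4) :|: (L a2 :&: L a3) in
  [/\ [disjoint D12 & D13], [disjoint D12 & D14] & [disjoint D13 & D14]].
Proof.
split; rewrite -setI_eq0; apply/eqP/setP => c;
  have := count_lists_le2 c henum; rewrite /= !inE;
  by case: (c \in L a1); case: (c \in L a2); case: (c \in L a3); case: (c \in L a4).
Qed.

Lemma pair_meets_le_LA :
  #|L a1 :&: L a2| + #|L a1 :&: L a3| + #|L a1 :&: L a4| +
  #|L a2 :&: L a3| + #|L a2 :&: L a4| + #|L a3 :&: L a4| <= 2 * #|LA p L a|.
Proof.
have e13 : enumerates p a [:: a1; a3; a2; a4].
  by apply: enumerates_perm henum; rewrite perm_cons (perm_catCA [:: a2] [:: a3]).
have e14 : enumerates p a [:: a1; a4; a2; a3].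
  by apply: enumerates_perm henum; rewrite perm_cons (perm_catC [:: a2; a3] [:: a4]).
have [d12 d13 d23] := matchings_disjoint.
have := card_disjoint3_le (max_meet_LA henum) (max_meet_LA e13) (max_meet_LA e14)
  (disjointW (max_meet_sub _ _ _ _ _) (max_meet_sub _ _ _ _ _) d12)
  (disjointW (max_meet_sub _ _ _ _ _) (max_meet_sub _ _ _ _ _) d13)
  (disjointW (max_meet_sub _ _ _ _ _) (max_meet_sub _ _ _ _ _) d23).
have := max_meet_card L a1 a2 a3 a4; have := max_meet_card L a1 a3 a2 a4.
have := max_meet_card L a1 a4 a2 a3; lia.
Qed.

End FourPart.

Lemma part_count_arith (n k k3 k4 : nat) :
  k + 2 * k3 + 3 * k4 <= n -> k3 + k4 <= k -> 1 <= k4 ->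
  2 * (k3 + k4) + (n - 1) <= 4 * ceil_div (n + k - 1) 3.
Proof. rewrite /ceil_div; lia. Qed.

Theorem lemma31 (k n : nat) (V C : finType) (p : V -> 'I_k)
    (L : V -> {set C}) (a : 'I_k) :
  1 <= k ->
  2 * k + 2 <= n ->
  #|V| = n ->
  (forall j : 'I_k, exists v : V, p v = j) ->
  (forall v, ceil_div (n + k - 1) 3 <= #|L v|) ->
  ~ (exists f : V -> C, (forall v, f v \in L v) /\ proper_col (cmp_adj p) f) ->
  #|\bigcup_(v : V) L v| <= n - 1 ->
  (forall (W : finType) (H : sgraph W), #|W| < n ->
      choosable H (maxn (chi H) (ceil_div (#|W| + chi H - 1) 3))) ->
  #|part p a| = 4 ->
  kcount p 3 + kcount p 4 <= #|LA p L a|.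
Proof.
move=> _ hn hV part_nonempty hL not_colorable hU IH h4.
have sparse := minimal_counterexample_sparse hn hV hL not_colorable IH.
have [kb1 kb2 kb3] := part_size_bounds part_nonempty h4.
have [a1 [a2 [a3 [a4 henum]]]] := enum_part4 h4.
have lists : 4 * ceil_div (n + k - 1) 3 <= #|L a1| + #|L a2| + #|L a3| + #|L a4|.
  rewrite !mulSn mul0n addn0 !addnA.
  exact: leq_add (leq_add (leq_add (hL a1) (hL a2)) (hL a3)) (hL a4).
have union4 : #|L a1 :|: L a2 :|: L a3 :|: L a4| <= n - 1.
  apply: leq_trans hU; apply: subset_leq_card.
  by rewrite !subUset !(bigcup_sup _ (erefl true)).
have := leq_trans (card_union4_ge (L a1) (L a2) (L a3) (L a4))
  (leq_add union4 (pair_meets_le_LA h4 sparse henum)).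
have counts := part_count_arith (leq_trans kb1 (eq_leq hV)) kb2 kb3.
move/(leq_trans lists)/(leq_trans counts).
by rewrite [X in X <= _]addnC leq_add2l leq_pmul2l.
Qed.
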